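(* Let $H$ be a finite-dimensional real Hilbert space and let $A = A_1 + A_2$, where $A_1, A_2: H\to H$ are linear operators with $A_1 = A_2^*$, and $A=A^*>0$. Let $\sigma\ge 1/4$, $\tau>0$, let $y^0,y^1\in H$ be arbitrary and $\varphi^n\in H$. Let $y^{n+1}$, $n\ge1$, be defined by the scheme $$G\,\frac{y^{n+1}-2y^n+y^{n-1}}{\tau^2} + A y^n = \varphi^n,\quad n=1,2,\dots,\qquad G = (E+\sigma\tau^2A_1)(E+\sigma\tau^2A_2).$$ Define $$R = E + \Big(\sigma-\frac14\Big)\tau^2 A + \sigma^2\tau^4 A_1A_2,\qquad \mathcal{E}_{n} = \left\|\frac{y^{n}+y^{n-1}}{2}\right\|_A^2 + \left\|\frac{y^{n}-y^{n-1}}{\tau}\right\|_{R}^2,\quad n\ge1 .$$ Then $R = R^* \ge E$, and for every $n\ge1$, regardless of $\tau$, $$\mathcal{E}_{n+1} \le \exp(\tau)\,\mathcal{E}_n + \exp(0.75\,\tau)\,\tau\,\|\varphi^n\|^2_{R^{-1}} .$$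
   Context: $H$ has scalar product $(\cdot,\cdot)$ and norm $\|y\|=(y,y)^{1/2}$; $A^*$ denotes the adjoint. For a self-adjoint positive definite operator $D$ on $H$, $\|y\|_D = (Dy,y)^{1/2}$; in particular $\|\varphi\|^2_{R^{-1}} = (R^{-1}\varphi,\varphi)$. $E$ denotes the identity operator on $H$, and $D_1\ge D_2$ means $(D_1y,y)\ge(D_2y,y)$ for all $y\in H$. *)

(* The finite-dimensional real Hilbert space H is modelled as R^n with the
   standard inner product; vectors are nat -> R (only indices < n matter),
   linear operators are n x n matrices nat -> nat -> R. *)
From Stdlib Require Import Reals ClassicalEpsilon.
Open Scope R_scope.

Definition vec := nat -> R.
Definition mat := nat -> nat -> R.

Fixpoint rsum (n : nat) (f : nat -> R) : R :=
  match n with O => 0 | S k => rsum k f + f k end.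

Definition ip (n : nat) (u v : vec) : R := rsum n (fun i => u i * v i).

Definition vadd (u v : vec) : vec := fun i => u i + v i.
Definition vsub (u v : vec) : vec := fun i => u i - v i.
Definition vscale (c : R) (u : vec) : vec := fun i => c * u i.

Definition mv (n : nat) (M : mat) (v : vec) : vec :=
  fun i => rsum n (fun j => M i j * v j).
Definition mm (n : nat) (M N : mat) : mat :=
  fun i j => rsum n (fun k => M i k * N k j).
Definition madd (M N : mat) : mat := fun i j => M i j + N i j.
Definition mscale (c : R) (M : mat) : mat := fun i j => c * M i j.
Definition ident : mat := fun i j => if Nat.eqb i j then 1 else 0.
Definition adj (M : mat) : mat := fun i j => M j i.

Definition veq (n : nat) (u v : vec) : Prop := forall i, (i < n)%nat -> u i = v i.
Definition meq (n : nat) (M N : mat) : Prop :=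
  forall i j, (i < n)%nat -> (j < n)%nat -> M i j = N i j.

Definition pos_def (n : nat) (D : mat) : Prop :=
  forall y : vec, (exists i, (i < n)%nat /\ y i <> 0) -> 0 < ip n (mv n D y) y.
Definition op_ge (n : nat) (D1 D2 : mat) : Prop :=
  forall y : vec, ip n (mv n D1 y) y >= ip n (mv n D2 y) y.

Definition normsq (n : nat) (D : mat) (y : vec) : R := ip n (mv n D y) y.

(* D^{-1} phi : a (the) solution w of D w = phi (chosen by epsilon) *)
Definition minv_apply (n : nat) (D : mat) (phi : vec) : vec :=
  epsilon (inhabits (fun _ : nat => 0)) (fun w => veq n (mv n D w) phi).

Definition normsq_inv (n : nat) (D : mat) (phi : vec) : R :=
  ip n (minv_apply n D phi) phi.

Definition Gop (n : nat) (sigma tau : R) (A1 A2 : mat) : mat :=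
  mm n (madd ident (mscale (sigma * tau ^ 2) A1))
       (madd ident (mscale (sigma * tau ^ 2) A2)).

Definition Rop (n : nat) (sigma tau : R) (A A1 A2 : mat) : mat :=
  madd (madd ident (mscale ((sigma - 1/4) * tau ^ 2) A))
       (mscale (sigma ^ 2 * tau ^ 4) (mm n A1 A2)).

Definition energy (n : nat) (tau : R) (A Rm : mat) (y : nat -> vec) (k : nat) : R :=
  normsq n A (vscale (1/2) (vadd (y k) (y (k - 1)%nat)))
  + normsq n Rm (vscale (/ tau) (vsub (y k) (y (k - 1)%nat))).

(* Expanding the product gives G = R + (tau^2/4) A with
   R = E + (sigma - 1/4) tau^2 A + sigma^2 tau^4 A1 A2.  Writing
   v = (y^{k+1} - y^k)/tau, w = (y^k - y^{k-1})/tau and a1, a0 for the two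
   half-sums, the scheme becomes R (v - w)/tau + A (a1 + a0)/2 = phi^k; pairing
   it with y^{k+1} - y^{k-1} = tau (v + w) = 2 (a1 - a0) and using the symmetry
   of R and A gives the energy identity E_{k+1} - E_k = (phi^k, y^{k+1} - y^{k-1}).
   Since A1 A2 = A2^* A2 >= 0 and sigma >= 1/4, R is symmetric with R >= E, hence
   invertible, and with z = R^{-1} phi^k the right-hand side equals
   tau ((R z, v) + (R z, w)).  Two weighted Cauchy-Schwarz inequalities in the
   R-form (weights 1 and 1 + tau/2) and an elementary scalar argument close the
   estimate, with 1 + t <= exp t supplying the exponential factors. *)

From Stdlib Require Import Reals Lra Lia Classical ClassicalEpsilon FunctionalExtensionality.
From mathcomp Require all_boot all_algebra Rstruct.
Open Scope R_scope.
Set Bullet Behavior "Strict Subproofs".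

Lemma rsum_ext n f g :
  (forall i, (i < n)%nat -> f i = g i) -> rsum n f = rsum n g.
Proof.
  induction n as [|n IH]; intros H; simpl; [reflexivity|].
  rewrite IH, H; [reflexivity | lia | intros; apply H; lia].
Qed.

Lemma rsum_plus n f g : rsum n (fun i => f i + g i) = rsum n f + rsum n g.
Proof. induction n as [|n IH]; simpl; [ring|]. rewrite IH; ring. Qed.

Lemma rsum_minus n f g : rsum n (fun i => f i - g i) = rsum n f - rsum n g.
Proof. induction n as [|n IH]; simpl; [ring|]. rewrite IH; ring. Qed.

Lemma rsum_scal n c f : rsum n (fun i => c * f i) = c * rsum n f.
Proof. induction n as [|n IH]; simpl; [ring|]. rewrite IH; ring. Qed.

Lemma rsum_mulr n c f : rsum n (fun i => f i * c) = rsum n f * c.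
Proof. induction n as [|n IH]; simpl; [ring|]. rewrite IH; ring. Qed.

Lemma rsum_zero n : rsum n (fun _ => 0) = 0.
Proof. induction n as [|n IH]; simpl; [ring|]. rewrite IH; ring. Qed.

Lemma rsum_swap n m f :
  rsum n (fun i => rsum m (fun j => f i j)) = rsum m (fun j => rsum n (fun i => f i j)).
Proof.
  induction n as [|n IH]; simpl; [now rewrite rsum_zero|].
  now rewrite IH, rsum_plus.
Qed.

Lemma rsum_nonneg n f : (forall i, (i < n)%nat -> 0 <= f i) -> 0 <= rsum n f.
Proof.
  induction n as [|n IH]; intros H; simpl; [lra|].
  assert (0 <= f n) by (apply H; lia).
  assert (0 <= rsum n f) by (apply IH; intros; apply H; lia).
  lra.
Qed.

Lemma rsum_eq0 n f :
  (forall i, (i < n)%nat -> 0 <= f i) -> rsum n f = 0 -> forall i, (i < n)%nat -> f i = 0.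
Proof.
  induction n as [|n IH]; intros Hnn Hsum i Hi; simpl in Hsum; [lia|].
  assert (0 <= f n) by (apply Hnn; lia).
  assert (0 <= rsum n f) by (apply rsum_nonneg; intros; apply Hnn; lia).
  destruct (Nat.eq_dec i n) as [->|Hne]; [lra|].
  apply IH; [intros; apply Hnn; lia | lra | lia].
Qed.

Lemma rsum_ident n i f : (i < n)%nat -> rsum n (fun k => ident i k * f k) = f i.
Proof.
  induction n as [|n IH]; intros Hi; simpl; [lia|].
  unfold ident at 2.
  destruct (Nat.eq_dec i n) as [->|Hne].
  - rewrite Nat.eqb_refl, (rsum_ext n _ (fun _ => 0)), rsum_zero; [ring|].
    intros k Hk; unfold ident; rewrite (proj2 (Nat.eqb_neq n k)) by lia; ring.
  - rewrite (proj2 (Nat.eqb_neq i n)), IH by lia; ring.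
Qed.

Lemma ip_ext n u u' v v' : veq n u u' -> veq n v v' -> ip n u v = ip n u' v'.
Proof. intros Hu Hv; apply rsum_ext; intros i Hi; now rewrite Hu, Hv. Qed.

Lemma ip_comm n u v : ip n u v = ip n v u.
Proof. apply rsum_ext; intros; ring. Qed.

Lemma ip_addl n u v w : ip n (vadd u v) w = ip n u w + ip n v w.
Proof. unfold ip, vadd; rewrite <- rsum_plus; apply rsum_ext; intros; ring. Qed.

Lemma ip_subl n u v w : ip n (vsub u v) w = ip n u w - ip n v w.
Proof. unfold ip, vsub; rewrite <- rsum_minus; apply rsum_ext; intros; ring. Qed.

Lemma ip_scalel n c u w : ip n (vscale c u) w = c * ip n u w.
Proof. unfold ip, vscale; rewrite <- rsum_scal; apply rsum_ext; intros; ring. Qed.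

Lemma ip_self_nonneg n u : 0 <= ip n u u.
Proof. apply rsum_nonneg; intros; apply Rle_0_sqr. Qed.

Lemma ip_self_eq0 n u : ip n u u = 0 -> veq n u (fun _ => 0).
Proof.
  intros H i Hi.
  assert (Hsq : u i * u i = 0).
  { apply (rsum_eq0 n (fun i => u i * u i)); auto; intros; apply Rle_0_sqr. }
  destruct (Rmult_integral _ _ Hsq); auto.
Qed.

Lemma mv_vadd n M u v : mv n M (vadd u v) = vadd (mv n M u) (mv n M v).
Proof. extensionality i; unfold mv, vadd; rewrite <- rsum_plus; apply rsum_ext; intros; ring. Qed.

Lemma mv_vsub n M u v : mv n M (vsub u v) = vsub (mv n M u) (mv n M v).
Proof. extensionality i; unfold mv, vsub; rewrite <- rsum_minus; apply rsum_ext; intros; ring. Qed.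

Lemma mv_vscale n M c u : mv n M (vscale c u) = vscale c (mv n M u).
Proof. extensionality i; unfold mv, vscale; rewrite <- rsum_scal; apply rsum_ext; intros; ring. Qed.

Lemma mv_madd n M N u : mv n (madd M N) u = vadd (mv n M u) (mv n N u).
Proof. extensionality i; unfold mv, vadd, madd; rewrite <- rsum_plus; apply rsum_ext; intros; ring. Qed.

Lemma mv_mscale n c M u : mv n (mscale c M) u = vscale c (mv n M u).
Proof. extensionality i; unfold mv, vscale, mscale; rewrite <- rsum_scal; apply rsum_ext; intros; ring. Qed.

Lemma mv_veq n M u u' : veq n u u' -> mv n M u = mv n M u'.
Proof. intros H; extensionality i; apply rsum_ext; intros; now rewrite H. Qed.

Lemma mv_ident n u : veq n (mv n ident u) u.
Proof. intros i Hi; apply rsum_ident; auto. Qed.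

Lemma mv_mm n M N u : mv n (mm n M N) u = mv n M (mv n N u).
Proof.
  extensionality i; unfold mv, mm.
  transitivity (rsum n (fun j => rsum n (fun k => M i k * N k j * u j))).
  - apply rsum_ext; intros; now rewrite <- rsum_mulr.
  - rewrite rsum_swap; apply rsum_ext; intros.
    rewrite <- rsum_scal; apply rsum_ext; intros; ring.
Qed.

(* The bilinear form (M u, v) of an operator M; all quadratic quantities of
   the theorem (|u|_M^2, the scheme paired with a vector) are values of it. *)
Definition bf (n : nat) (M : mat) (u v : vec) : R := ip n (mv n M u) v.

Lemma normsq_bf n M u : normsq n M u = bf n M u u.
Proof. reflexivity. Qed.

Lemma bf_addl n M u v w : bf n M (vadd u v) w = bf n M u w + bf n M v w.
Proof. unfold bf; now rewrite mv_vadd, ip_addl. Qed.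

Lemma bf_subl n M u v w : bf n M (vsub u v) w = bf n M u w - bf n M v w.
Proof. unfold bf; now rewrite mv_vsub, ip_subl. Qed.

Lemma bf_scalel n M c u w : bf n M (vscale c u) w = c * bf n M u w.
Proof. unfold bf; now rewrite mv_vscale, ip_scalel. Qed.

Lemma bf_addr n M u v w : bf n M w (vadd u v) = bf n M w u + bf n M w v.
Proof. unfold bf; rewrite !(ip_comm n (mv n M w)); apply ip_addl. Qed.

Lemma bf_subr n M u v w : bf n M w (vsub u v) = bf n M w u - bf n M w v.
Proof. unfold bf; rewrite !(ip_comm n (mv n M w)); apply ip_subl. Qed.

Lemma bf_scaler n M c u w : bf n M w (vscale c u) = c * bf n M w u.
Proof. unfold bf; rewrite !(ip_comm n (mv n M w)); apply ip_scalel. Qed.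

Lemma bf_madd n M N u v : bf n (madd M N) u v = bf n M u v + bf n N u v.
Proof. unfold bf; now rewrite mv_madd, ip_addl. Qed.

Lemma bf_mscale n c M u v : bf n (mscale c M) u v = c * bf n M u v.
Proof. unfold bf; now rewrite mv_mscale, ip_scalel. Qed.

Lemma bf_mm n M N u v : bf n (mm n M N) u v = bf n M (mv n N u) v.
Proof. unfold bf; now rewrite mv_mm. Qed.

Lemma bf_ident n u v : bf n ident u v = ip n u v.
Proof. apply ip_ext; [apply mv_ident | intros ? ?; reflexivity]. Qed.

Lemma bf_vext_l n M u u' v : veq n u u' -> bf n M u v = bf n M u' v.
Proof. intros H; unfold bf; now rewrite (mv_veq n M u u' H). Qed.

Lemma bf_meq n M N u v : meq n M N -> bf n M u v = bf n N u v.
Proof.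
  intros H; apply ip_ext; [|intros ? ?; reflexivity].
  intros i Hi; apply rsum_ext; intros; now rewrite H.
Qed.

Lemma bf_adj n M u v : bf n (adj M) u v = bf n M v u.
Proof.
  unfold bf, ip, mv, adj.
  transitivity (rsum n (fun i => rsum n (fun j => M j i * u j * v i))).
  - apply rsum_ext; intros; now rewrite <- rsum_mulr.
  - rewrite rsum_swap; apply rsum_ext; intros.
    rewrite <- rsum_mulr; apply rsum_ext; intros; ring.
Qed.

Lemma bf_sym n M u v : meq n M (adj M) -> bf n M u v = bf n M v u.
Proof. intros H; rewrite (bf_meq n M (adj M)) by exact H; apply bf_adj. Qed.

Lemma bf_gram n M N u v : meq n M (adj N) -> bf n (mm n M N) u v = ip n (mv n N u) (mv n N v).
Proof.
  intros H; rewrite bf_mm, (bf_meq n M (adj N)) by exact H.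
  rewrite bf_adj; apply ip_comm.
Qed.

Lemma pos_def_nonneg n M u : pos_def n M -> 0 <= bf n M u u.
Proof.
  intros HM; destruct (classic (exists i, (i < n)%nat /\ u i <> 0)) as [Hnz|Hz].
  - left; now apply HM.
  - right; unfold bf, ip; rewrite (rsum_ext n _ (fun _ => 0)), rsum_zero; [reflexivity|].
    intros i Hi; destruct (Req_dec (u i) 0) as [->|Hne]; [ring|].
    exfalso; apply Hz; now exists i.
Qed.

Section SymmetricForm.
Variables (n : nat) (M : mat).
Hypothesis M_sym : forall u v, bf n M u v = bf n M v u.

Lemma bf_diff_squares u w : bf n M (vadd u w) (vsub u w) = bf n M u u - bf n M w w.
Proof. rewrite bf_addl, !bf_subr, (M_sym w u); ring. Qed.

Lemma bf_cauchy_schwarz a b t :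
  (forall u, 0 <= bf n M u u) -> 0 < t -> 2 * bf n M a b <= t * bf n M a a + bf n M b b / t.
Proof.
  intros Hpsd Ht; pose proof (Hpsd (vsub (vscale t a) b)) as H.
  rewrite bf_subl, !bf_subr, !bf_scalel, !bf_scaler, (M_sym b a) in H.
  apply (Rmult_le_reg_l t); [exact Ht|]; field_simplify; [nra | lra].
Qed.

End SymmetricForm.

Lemma adj_ident n : meq n ident (adj ident).
Proof. intros i j _ _; unfold adj, ident; now rewrite Nat.eqb_sym. Qed.

Lemma adj_madd n M N :
  meq n M (adj M) -> meq n N (adj N) -> meq n (madd M N) (adj (madd M N)).
Proof. intros HM HN i j Hi Hj; unfold madd, adj; now rewrite (HM i j), (HN i j). Qed.

Lemma adj_mscale n c M : meq n M (adj M) -> meq n (mscale c M) (adj (mscale c M)).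
Proof. intros HM i j Hi Hj; unfold mscale, adj; now rewrite (HM i j). Qed.

Lemma adj_gram n M N : meq n M (adj N) -> meq n (mm n M N) (adj (mm n M N)).
Proof.
  intros H i j Hi Hj; unfold mm, adj; apply rsum_ext; intros k Hk.
  rewrite (H i k), (H j k) by assumption; unfold adj; ring.
Qed.

Module MatrixSolve.
Import all_boot all_algebra Rstruct GRing.Theory.
Local Open Scope ring_scope.

Lemma rsumE n f : rsum n f = \sum_(i < n) f i.
Proof. by elim: n => [|n IH] /=; rewrite ?big_ord0 // big_ord_recr /= IH. Qed.

Definition vec_of {n} (x : 'rV[R]_n) : vec :=
  fun j => if (insub j : option 'I_n) is Some o then x 0 o else 0.

Lemma vec_ofE n (x : 'rV[R]_n) (o : 'I_n) : vec_of x o = x 0 o.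
Proof. by rewrite /vec_of valK. Qed.

Lemma mv_surjective n (M : mat) (b : vec) :
  (forall u, veq n (mv n M u) (fun _ => 0%R) -> veq n u (fun _ => 0%R)) ->
  exists w, veq n (mv n M w) b.
Proof.
move=> Minj; pose Mx : 'M[R]_n := \matrix_(i, j) M (j : nat) (i : nat).
have mvE (x : 'rV[R]_n) (o : 'I_n) : mv n M (vec_of x) o = (x *m Mx) 0 o.
  rewrite /mv rsumE !mxE; apply: eq_bigr => l _.
  by rewrite vec_ofE mxE mulrC.
have Mx_unit : Mx \in unitmx.
  rewrite -row_free_unit -kermx_eq0; apply/eqP/row_matrixP => i; rewrite row0.
  set x := row i (kermx Mx).
  have x_ker : x *m Mx = 0 by rewrite /x -row_mul mulmx_ker row0.
  have Hx : veq n (vec_of x) (fun _ => 0%R).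
    apply: Minj => l /ssrnat.ltP Hl; rewrite -[l]/(nat_of_ord (Ordinal Hl)).
    by rewrite mvE x_ker mxE.
  by apply/rowP => j; rewrite [RHS]mxE -vec_ofE (Hx j (ssrnat.ltP (ltn_ord j))).
exists (vec_of ((\row_j b (j : nat)) *m invmx Mx)).
move=> l /ssrnat.ltP Hl; rewrite -[l]/(nat_of_ord (Ordinal Hl)).
by rewrite mvE -mulmxA mulVmx // mulmx1 mxE.
Qed.
End MatrixSolve.

(* An operator M >= E is injective, so M w = phi is solvable and the chosen
   solution minv_apply n M phi satisfies it. *)
Lemma minv_apply_spec n M phi :
  (forall u, ip n u u <= bf n M u u) -> veq n (mv n M (minv_apply n M phi)) phi.
Proof.
  intros Hcoer; unfold minv_apply; apply epsilon_spec, MatrixSolve.mv_surjective.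
  intros u Hu; apply ip_self_eq0.
  assert (Hzero : bf n M u u = 0).
  { unfold bf; rewrite (ip_ext n _ (fun _ => 0) u u Hu (fun _ _ => eq_refl)).
    unfold ip; rewrite (rsum_ext n _ (fun _ => 0)), rsum_zero; [reflexivity|].
    intros; ring. }
  pose proof (Hcoer u); pose proof (ip_self_nonneg n u); lra.
Qed.

Lemma minv_pairing n M phi x :
  (forall u, ip n u u <= bf n M u u) -> ip n phi x = bf n M (minv_apply n M phi) x.
Proof.
  intros Hcoer; apply ip_ext; [|intros ? ?; reflexivity].
  intros i Hi; symmetry; now apply minv_apply_spec.
Qed.

Lemma normsq_inv_bf n M phi :
  (forall u, ip n u u <= bf n M u u) ->
  normsq_inv n M phi = bf n M (minv_apply n M phi) (minv_apply n M phi).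
Proof.
  intros Hcoer; unfold normsq_inv; rewrite ip_comm; now apply minv_pairing.
Qed.

Lemma Rop_form n sigma tau A A1 A2 u v :
  bf n (Rop n sigma tau A A1 A2) u v
  = ip n u v + (sigma - 1/4) * tau ^ 2 * bf n A u v
    + sigma ^ 2 * tau ^ 4 * bf n (mm n A1 A2) u v.
Proof. unfold Rop; now rewrite !bf_madd, !bf_mscale, bf_ident. Qed.

Lemma bf_factorized n a b M N u v :
  bf n (mm n (madd ident (mscale a M)) (madd ident (mscale b N))) u v
  = ip n u v + a * bf n M u v + b * bf n N u v + a * b * bf n (mm n M N) u v.
Proof.
  rewrite bf_mm, bf_madd, bf_mscale, bf_ident.
  assert (Hx : veq n (mv n (madd ident (mscale b N)) u) (vadd u (vscale b (mv n N u)))).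
  { rewrite mv_madd, mv_mscale; intros i Hi; unfold vadd; now rewrite mv_ident. }
  rewrite (ip_ext n _ _ v v Hx (fun _ _ => eq_refl)), (bf_vext_l n M _ _ v Hx).
  rewrite ip_addl, ip_scalel, bf_addl, bf_scalel, bf_mm.
  unfold bf; ring.
Qed.

Lemma Gop_split n sigma tau A A1 A2 u v :
  meq n A (madd A1 A2) ->
  bf n (Gop n sigma tau A1 A2) u v
  = bf n (Rop n sigma tau A A1 A2) u v + tau ^ 2 / 4 * bf n A u v.
Proof.
  intros hA; unfold Gop; rewrite bf_factorized, Rop_form.
  rewrite (bf_meq n A (madd A1 A2)), bf_madd by exact hA.
  field.
Qed.

Section OperatorR.
Variables (n : nat) (A A1 A2 : mat) (sigma tau : R).
Hypothesis hA12 : meq n A1 (adj A2).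
Hypothesis hAsym : meq n A (adj A).

(* R is self-adjoint, since A and A1 A2 = A2^* A2 are. *)
Lemma Rop_symmetric : meq n (Rop n sigma tau A A1 A2) (adj (Rop n sigma tau A A1 A2)).
Proof.
  unfold Rop; repeat apply adj_madd.
  - apply adj_ident.
  - now apply adj_mscale.
  - now apply adj_mscale, adj_gram.
Qed.

(* R >= E: the A-term and the Gram term A2^* A2 are nonnegative. *)
Lemma Rop_coercive u :
  pos_def n A -> sigma >= 1/4 -> ip n u u <= bf n (Rop n sigma tau A A1 A2) u u.
Proof.
  intros hApos hsigma; rewrite Rop_form, bf_gram by exact hA12.
  assert (0 <= (sigma - 1/4) * tau ^ 2 * bf n A u u).
  { apply Rmult_le_pos; [apply Rmult_le_pos; [lra | apply pow2_ge_0] |].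
    now apply pos_def_nonneg. }
  assert (0 <= sigma ^ 2 * tau ^ 4 * ip n (mv n A2 u) (mv n A2 u)).
  { replace (tau ^ 4) with ((tau ^ 2) ^ 2) by ring.
    apply Rmult_le_pos; [apply Rmult_le_pos; apply pow2_ge_0 | apply ip_self_nonneg]. }
  lra.
Qed.

End OperatorR.

Lemma op_ge_ident_of_form n M :
  (forall u, ip n u u <= bf n M u u) -> op_ge n M ident.
Proof. intros H u; change (bf n M u u >= bf n ident u u); rewrite bf_ident; apply Rle_ge, H. Qed.

Definition pair_energy (n : nat) (tau : R) (A Rm : mat) (u w : vec) : R :=
  normsq n A (vscale (1/2) (vadd u w)) + normsq n Rm (vscale (/ tau) (vsub u w)).

Lemma energy_succ n tau A Rm y k :
  energy n tau A Rm y (S k) = pair_energy n tau A Rm (y (S k)) (y k).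
Proof. unfold energy, pair_energy; now rewrite Nat.sub_succ, Nat.sub_0_r. Qed.

Section EnergyIdentity.
Variables (n : nat) (tau : R) (G A Rm : mat).
Hypothesis tau_neq0 : tau <> 0.
Hypothesis G_split : forall u v, bf n G u v = bf n Rm u v + tau ^ 2 / 4 * bf n A u v.
Hypothesis A_sym : forall u v, bf n A u v = bf n A v u.
Hypothesis R_sym : forall u v, bf n Rm u v = bf n Rm v u.

Lemma energy_identity p q r f :
  veq n (vadd (mv n G (vscale (/ tau ^ 2) (vadd (vsub p (vscale 2 q)) r))) (mv n A q)) f ->
  pair_energy n tau A Rm p q - pair_energy n tau A Rm q r = ip n f (vsub p r).
Proof.
  intros Hscheme.
  set (d := vscale (/ tau ^ 2) (vadd (vsub p (vscale 2 q)) r)) in *.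
  set (a1 := vscale (1/2) (vadd p q)); set (a0 := vscale (1/2) (vadd q r)).
  set (v := vscale (/ tau) (vsub p q)); set (w := vscale (/ tau) (vsub q r)).
  assert (Hd : d = vscale (/ tau) (vsub v w)).
  { extensionality i; unfold d, v, w, vscale, vsub, vadd; field; exact tau_neq0. }
  assert (Hmean : vadd (vscale (tau ^ 2 / 4) d) q = vscale (1/2) (vadd a1 a0)).
  { extensionality i; unfold d, a1, a0, vscale, vsub, vadd; field; exact tau_neq0. }
  assert (Hpr_vw : vsub p r = vscale tau (vadd v w)).
  { extensionality i; unfold v, w, vscale, vsub, vadd; field; exact tau_neq0. }
  assert (Hpr_a : vsub p r = vscale 2 (vsub a1 a0)).
  { extensionality i; unfold a1, a0, vscale, vsub, vadd; field. }
  (* pair the scheme with p - r, and split G = R + (tau^2/4) A *)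
  rewrite <- (ip_ext n _ f (vsub p r) (vsub p r) Hscheme (fun _ _ => eq_refl)).
  rewrite ip_addl; fold (bf n G d (vsub p r)) (bf n A q (vsub p r)).
  rewrite G_split, Rplus_assoc, <- bf_scalel, <- bf_addl, Hmean.
  (* the R-part is the kinetic term, the A-part the potential term *)
  assert (HR : bf n Rm d (vsub p r) = bf n Rm v v - bf n Rm w w).
  { rewrite Hd, Hpr_vw, bf_scalel, bf_scaler, (R_sym (vsub v w)), bf_diff_squares
      by exact R_sym.
    field; exact tau_neq0. }
  assert (HA : bf n A (vscale (1/2) (vadd a1 a0)) (vsub p r) = bf n A a1 a1 - bf n A a0 a0).
  { rewrite Hpr_a, bf_scalel, bf_scaler, bf_diff_squares by exact A_sym; field. }
  unfold pair_energy; rewrite !normsq_bf, HR, HA; fold a1 a0 v w; ring.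
Qed.

End EnergyIdentity.

(* Scalar core: X = E_{k+1}, Y = E_k with kinetic parts V1 <= X, V0 <= Y and
   X - Y = tau (P1 + P0), where P1, P0 are controlled by Cauchy-Schwarz with
   weights s = 1 + tau/2 and 1.  Absorbing the X/s term yields a polynomial bound. *)
Lemma one_step_polynomial_bound (tau X Y V1 V0 Z P1 P0 : R) :
  0 < tau -> 0 <= V0 -> V1 <= X -> V0 <= Y ->
  X - Y = tau * (P1 + P0) ->
  2 * P0 <= Z + V0 ->
  2 * P1 <= (1 + tau/2) * Z + V1 / (1 + tau/2) ->
  X <= (1 + tau/2) ^ 2 * Y + (1 + tau/2) * (1 + tau/4) * (tau * Z).
Proof.
  intros Htau HV0 HV1 HV0Y Hdiff HP0 HP1.
  set (s := 1 + tau/2) in *.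
  assert (Hs : 0 < s) by (unfold s; lra).
  assert (HV1s : tau * (V1 / s) <= tau * (X / s)).
  { apply Rmult_le_compat_l; [lra|]; unfold Rdiv; apply Rmult_le_compat_r; [|lra].
    left; apply Rinv_0_lt_compat; lra. }
  assert (Hlin : X - Y <= tau / 2 * (Z + Y) + tau / 2 * (s * Z + X / s)) by nra.
  assert (HXs : s * (X / s) = X) by (field; lra).
  assert (Hmul : s * (X - Y) <= s * (tau / 2 * (Z + Y) + tau / 2 * (s * Z + X / s)))
    by (apply Rmult_le_compat_l; lra).
  unfold s in *; nra.
Qed.

(* The polynomial factors are dominated by exponentials, since 1 + t <= exp t. *)
Lemma polynomial_le_exp (tau Y W : R) :
  0 < tau -> 0 <= Y -> 0 <= W ->
  (1 + tau/2) ^ 2 * Y + (1 + tau/2) * (1 + tau/4) * W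
  <= exp tau * Y + exp (3/4 * tau) * W.
Proof.
  intros Htau HY HW.
  assert (E2 : 1 + tau/2 <= exp (tau/2)) by (left; apply exp_ineq1; lra).
  assert (E4 : 1 + tau/4 <= exp (tau/4)) by (left; apply exp_ineq1; lra).
  replace (exp tau) with (exp (tau/2) ^ 2)
    by (simpl; rewrite Rmult_1_r, <- exp_plus; f_equal; field).
  replace (exp (3/4 * tau)) with (exp (tau/2) * exp (tau/4))
    by (rewrite <- exp_plus; f_equal; field).
  apply Rplus_le_compat; apply Rmult_le_compat_r; auto.
  - apply pow_incr; lra.
  - apply Rmult_le_compat; lra.
Qed.

Section EnergyStep.
Variables (n : nat) (tau : R) (A Rm : mat).
Hypothesis tau_pos : 0 < tau.
Hypothesis A_nonneg : forall u, 0 <= bf n A u u.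
Hypothesis R_sym : forall u v, bf n Rm u v = bf n Rm v u.
Hypothesis R_coercive : forall u, ip n u u <= bf n Rm u u.

Lemma R_nonneg u : 0 <= bf n Rm u u.
Proof. pose proof (R_coercive u); pose proof (ip_self_nonneg n u); lra. Qed.

Lemma pair_energy_ge_kinetic u w :
  bf n Rm (vscale (/ tau) (vsub u w)) (vscale (/ tau) (vsub u w)) <= pair_energy n tau A Rm u w.
Proof. unfold pair_energy; rewrite !normsq_bf; pose proof (A_nonneg (vscale (1/2) (vadd u w))); lra. Qed.

Lemma energy_step_bound p q r f :
  pair_energy n tau A Rm p q - pair_energy n tau A Rm q r = ip n f (vsub p r) ->
  pair_energy n tau A Rm p q
  <= exp tau * pair_energy n tau A Rm q r + exp (3/4 * tau) * tau * normsq_inv n Rm f.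
Proof.
  intros Hid.
  set (z := minv_apply n Rm f).
  set (v := vscale (/ tau) (vsub p q)); set (w := vscale (/ tau) (vsub q r)).
  assert (Hpr : vsub p r = vscale tau (vadd v w)).
  { extensionality i; unfold v, w, vscale, vsub, vadd; field; lra. }
  assert (Hsource : ip n f (vsub p r) = tau * (bf n Rm z v + bf n Rm z w)).
  { unfold z; rewrite (minv_pairing n Rm) by exact R_coercive.
    now rewrite Hpr, bf_scaler, bf_addr. }
  assert (CS0 : 2 * bf n Rm z w <= bf n Rm z z + bf n Rm w w).
  { pose proof (bf_cauchy_schwarz n Rm R_sym z w 1 R_nonneg Rlt_0_1); lra. }
  assert (CS1 : 2 * bf n Rm z v <= (1 + tau/2) * bf n Rm z z + bf n Rm v v / (1 + tau/2)).
  { apply bf_cauchy_schwarz; [exact R_sym | exact R_nonneg | lra]. }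
  assert (HY : 0 <= pair_energy n tau A Rm q r).
  { pose proof (pair_energy_ge_kinetic q r); pose proof (R_nonneg w); unfold w in *; lra. }
  rewrite normsq_inv_bf, (Rmult_assoc (exp _)) by exact R_coercive; fold z.
  eapply Rle_trans; [|apply polynomial_le_exp; [lra | exact HY |]].
  - apply (one_step_polynomial_bound tau _ _ (bf n Rm v v) (bf n Rm w w) _
             (bf n Rm z v) (bf n Rm z w)); auto.
    + apply R_nonneg.
    + apply pair_energy_ge_kinetic.
    + apply pair_energy_ge_kinetic.
    + now rewrite Hid.
  - apply Rmult_le_pos; [lra | apply R_nonneg].
Qed.

End EnergyStep.

Theorem theorem4 (n : nat) (A A1 A2 : mat) (sigma tau : R)
  (y phi : nat -> vec)
  (hA : meq n A (madd A1 A2))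
  (hA12 : meq n A1 (adj A2))
  (hAsym : meq n A (adj A))
  (hApos : pos_def n A)
  (hsigma : sigma >= 1/4)
  (htau : tau > 0)
  (hscheme : forall k : nat, (1 <= k)%nat ->
     veq n (vadd (mv n (Gop n sigma tau A1 A2)
                      (vscale (/ tau ^ 2)
                         (vadd (vsub (y (S k)) (vscale 2 (y k))) (y (k - 1)%nat))))
                 (mv n A (y k)))
           (phi k)) :
  meq n (Rop n sigma tau A A1 A2) (adj (Rop n sigma tau A A1 A2)) /\
  op_ge n (Rop n sigma tau A A1 A2) ident /\
  (forall k : nat, (1 <= k)%nat ->
     energy n tau A (Rop n sigma tau A A1 A2) y (S k)
     <= exp tau * energy n tau A (Rop n sigma tau A A1 A2) y k
        + exp (3/4 * tau) * tau * normsq_inv n (Rop n sigma tau A A1 A2) (phi k)).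
Proof.
  set (Rm := Rop n sigma tau A A1 A2).
  assert (HRsym : meq n Rm (adj Rm)) by (apply Rop_symmetric; assumption).
  assert (HRcoer : forall u, ip n u u <= bf n Rm u u)
    by (intros; apply Rop_coercive; assumption).
  split; [exact HRsym | split; [now apply op_ge_ident_of_form |]].
  intros k Hk.
  rewrite energy_succ; change (energy n tau A Rm y k)
    with (pair_energy n tau A Rm (y k) (y (k - 1)%nat)).
  apply energy_step_bound; [lra | intros; now apply pos_def_nonneg
    | intros; now apply bf_sym | exact HRcoer |].
  apply (energy_identity n tau (Gop n sigma tau A1 A2)); [lra | | | | exact (hscheme k Hk)].
  - intros; now apply Gop_split.
  - intros; now apply bf_sym.
  - intros; now apply bf_sym.
Qed.
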